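(* For every integer $n \ge 2$ and every weighted undirected graph $G=(V,w)$ on $n$ vertices, $\mathrm{cdim}(G) \le 2n-3$.
   Context: A weighted undirected graph $G=(V,w)$ consists of a finite vertex set $V$ and a weight function $w$ assigning a nonnegative real number to each unordered pair $\{x,y\}$ of distinct vertices (an ''edge slot''). The edge set is $E=\{e : w(e)>0\}$, and $m=|E|$. For $\emptyset \ne X \subsetneq V$, $\Delta(X)$ denotes the set of edges of $E$ with exactly one endpoint in $X$; such a set is a cut with shores $X$ and $V\setminus X$, and its weight is $w(\Delta(X))=\sum_{e\in\Delta(X)} w(e)$. A minimum cut (mincut) is a cut of minimum weight; $\mathcal{M}(G)$ is the set of mincuts. For $S\subseteq E$, $\chi(S)\in\{0,1\}^m$ is its characteristic vector indexed by the edges in $E$. The cut dimension is $\mathrm{cdim}(G)=\dim\,\mathrm{span}\{\chi(S): S\in\mathcal{M}(G)\}$. *)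

From mathcomp Require Import all_boot all_order all_algebra.
Set Implicit Arguments. Unset Strict Implicit. Unset Printing Implicit Defensive.
Import Order.TTheory GRing.Theory Num.Theory.
Local Open Scope ring_scope.

Section CutDim.
Variables (R : realFieldType) (n : nat) (w : 'I_n -> 'I_n -> R).

(* Vertex set V = 'I_n.  An unordered pair {x,y} (x <> y) is represented
   once, as the ordered pair (x,y) with x < y; its weight is w x y. *)

Definition edges : {set 'I_n * 'I_n} :=
  [set e : 'I_n * 'I_n | (e.1 < e.2)%N && (0 < w e.1 e.2)].

Definition in_cut (X : {set 'I_n}) (e : 'I_n * 'I_n) : bool :=
  (e \in edges) && ((e.1 \in X) != (e.2 \in X)).

Definition cut_weight (X : {set 'I_n}) : R :=
  \sum_(e in edges | in_cut X e) w e.1 e.2.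

Definition shore (X : {set 'I_n}) : bool := (X != set0) && (X != setT).

Definition is_mincut_shore (X : {set 'I_n}) : bool :=
  shore X && [forall Y : {set 'I_n}, shore Y ==> (cut_weight X <= cut_weight Y)].

(* Matrix whose rows are the characteristic vectors chi(Delta(X)) in R^m
   (columns indexed by the m edges of E), one row per shore X of a mincut,
   and zero rows for the other subsets X. *)
Definition mincut_matrix : 'M[R]_(#|{: {set 'I_n}}|, #|edges|) :=
  \matrix_(i, j)
    (if is_mincut_shore (enum_val i) && in_cut (enum_val i) (enum_val j)
     then 1 else 0).

Definition cdim : nat := \rank mincut_matrix.

End CutDim.

(* Fix a root vertex r.  Every mincut has exactly one shore avoiding r, so
   the cut space is spanned by the vectors chi(Delta(X)) with X a mincut
   shore not containing r.  This family is closed under uncrossing: if two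
   such shores X, Y cross, submodularity of the cut function forces
   X :&: Y and X :|: Y to be mincut shores as well, and no edge joins
   X \ Y to Y \ X, whence chi X + chi Y = chi (X :&: Y) + chi (X :|: Y).
   A classical uncrossing argument then shows that any family closed under
   uncrossing is spanned by a laminar subfamily, and a laminar family of
   nonempty subsets of a set U has at most 2|U| - 1 members.  With
   U = V \ {r} this gives the bound 2(n - 1) - 1 = 2n - 3. *)

From mathcomp Require Import all_boot all_order all_algebra.
From mathcomp Require Import zify lra.
Set Implicit Arguments. Unset Strict Implicit. Unset Printing Implicit Defensive.
Import Order.TTheory GRing.Theory Num.Theory.

Section Laminar.
Variable T : finType.
Implicit Types (U V X Y Z : {set T}) (L : {set {set T}}).

Definition cross X Y :=
  [&& X :&: Y != set0, ~~ (X \subset Y) & ~~ (Y \subset X)].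

Definition laminar L := forall X Y, X \in L -> Y \in L -> ~~ cross X Y.

Definition laminar_in U L :=
  laminar L /\ forall X, X \in L -> X != set0 /\ X \subset U.

Lemma crossC X Y : cross X Y = cross Y X.
Proof.
by rewrite /cross setIC; case: (_ \subset _); case: (_ \subset _); rewrite ?andbF.
Qed.

Lemma crossxx X : ~~ cross X X.
Proof. by rewrite /cross subxx andbF. Qed.

Lemma nocrossP X Y : ~~ cross X Y ->
  [\/ X :&: Y = set0, X \subset Y | Y \subset X].
Proof.
rewrite /cross; case: eqP => [->|_] /=; first by constructor.
case: (X \subset Y) => /=; first by constructor 2.
by case: (Y \subset X) => //= _; constructor 3.
Qed.

Lemma cross_setI Z X Y : ~~ cross Z X -> cross Z (X :&: Y) -> cross Z Y.
Proof.
move=> /nocrossP ncZX /and3P[meet nsub1 nsub2].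
apply/and3P; split.
- by apply: contraNneq meet; rewrite setIA setIAC => ->; rewrite set0I.
- case: ncZX => [ZX0 | ZX | XZ].
  + by move: meet; rewrite setIA ZX0 set0I eqxx.
  + by apply: contra nsub1 => ZY; rewrite subsetI ZX ZY.
  + by case/negP: nsub2; apply: subset_trans XZ; exact: subsetIl.
- by apply: contra nsub2 => YZ; apply: subset_trans YZ; exact: subsetIr.
Qed.

Lemma cross_setU Z X Y :
  cross X Y -> ~~ cross Z X -> cross Z (X :|: Y) -> cross Z Y.
Proof.
move=> /and3P[/set0Pn[x XYx] _ _] /nocrossP ncZX /and3P[meet nsub1 nsub2].
move: XYx; rewrite inE => /andP[Xx Yx].
have nZY : ~~ (Z \subset Y).
  by apply: contra nsub1 => ZY; exact: subset_trans ZY (subsetUr _ _).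
case: ncZX => [ZX0 | ZX | XZ].
- apply/and3P; split => //.
  + by move: meet; rewrite setIUr ZX0 set0U.
  + apply/negP => /subsetP/(_ x Yx) Zx.
    by move/setP: ZX0 => /(_ x); rewrite !inE Zx Xx.
- by case/negP: nsub1; exact: subset_trans ZX (subsetUl _ _).
- apply/and3P; split => //.
  + by apply/set0Pn; exists x; rewrite inE (subsetP XZ x Xx).
  + by apply: contra nsub2 => YZ; rewrite subUset XZ YZ.
Qed.

Lemma laminar_subset L0 L : L0 \subset L -> laminar L -> laminar L0.
Proof. by move=> /subsetP sL0 lamL X Y /sL0 XL /sL0 YL; exact: lamL. Qed.

Lemma laminar_in_restrict U V L :
  laminar_in U L -> laminar_in V [set X in L | X \subset V].
Proof.
case=> lamL memL; split.
  by apply: laminar_subset lamL; apply/subsetP => X; rewrite inE => /andP[].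
by move=> X; rewrite inE => /andP[/memL[X0 _] XV].
Qed.

(* A largest member M of a laminar family of subsets of U splits the
   family: every member lies inside M or inside its complement in U. *)
Lemma laminar_split U L X0 : laminar_in U L -> X0 \in L ->
  exists2 M, M \in L &
    forall X, X \in L -> (X \subset M) || (X \subset U :\: M).
Proof.
case=> lamL memL X0L.
have [M ML Mmax] := arg_maxnP (fun X : {set T} => #|X|) X0L.
exists M => // X XL; have [_ XU] := memL X XL.
case/nocrossP: (lamL X M XL ML) => [XM0 | -> // | MX].
- apply/orP; right; rewrite subsetD XU /=.
  by rewrite -setI_eq0 XM0.
- by rewrite (eqP (_ : M == X)) ?subxx // eqEcard MX; exact: Mmax.
Qed.

(* Size bound for laminar families: a laminar family of nonempty subsets
   of a nonempty set U has at most 2|U| - 1 members, and at most 2|U| - 2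
   if U itself is not a member. *)
Lemma laminar_card U L : U != set0 -> laminar_in U L ->
  #|L| + (U \notin L) <= (2 * #|U|).-1.
Proof.
move: {2}#|U| (leqnn #|U|) => k; elim: k U L => [|k IH] U L.
  by rewrite leqn0 cards_eq0 => /eqP ->; rewrite eqxx.
move=> Uk U0 lamL; have [_ memL] := lamL.
have U_gt0 : 0 < #|U| by rewrite card_gt0.
suff proper_bound : #|L :\ U| <= 2 * #|U| - 2.
  move: proper_bound U_gt0; rewrite (cardsD1 U L); move: #|L :\ U| #|U| => a u.
  by case: (U \in L) => /=; lia.
have [-> | [X0 X0L]] := set_0Vmem (L :\ U); first by rewrite cards0.
have lamL0 : laminar_in U (L :\ U).
  case: lamL => lam _; split; first exact: laminar_subset (subsetDl _ _) lam.
  by move=> X /setD1P[_ /memL].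
have [M /setD1P[MU ML] Msplit] := laminar_split lamL0 X0L.
have [M0 MsubU] := memL M ML.
have M_proper : M \proper U by rewrite properEneq MU.
have partU : #|M| + #|U :\: M| = #|U|.
  by rewrite -(cardsID M U) (setIidPr MsubU).
have M_gt0 : 0 < #|M| by rewrite card_gt0.
have MC_gt0 : 0 < #|U :\: M| by move: (proper_card M_proper); lia.
pose L1 := [set X in L | X \subset M].
pose L2 := [set X in L | X \subset U :\: M].
have bound1 : #|L1| <= (2 * #|M|).-1.
  apply: leq_trans (leq_addr (M \notin L1) _) _.
  apply: IH (laminar_in_restrict M lamL); last by rewrite -card_gt0.
  by move: (proper_card M_proper); lia.
have bound2 : #|L2| <= (2 * #|U :\: M|).-1.
  apply: leq_trans (leq_addr (U :\: M \notin L2) _) _.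
  by apply: IH (laminar_in_restrict (U :\: M) lamL); rewrite -?card_gt0; lia.
have cover : L :\ U \subset L1 :|: L2.
  apply/subsetP => X XL0; have /setD1P[_ XL] := XL0.
  by rewrite !inE XL; exact: Msplit.
by have := leq_trans (subset_leq_card cover) (leq_card_setU L1 L2); lia.
Qed.

Definition crossers L Y := [set Z in L | cross Z Y].

Lemma laminar_setU1 L Y : laminar L -> crossers L Y = set0 -> laminar (Y |: L).
Proof.
move=> lamL noCross X Z.
have ncY W : W \in L -> ~~ cross W Y.
  by move=> WL; apply/negP => c; move/setP: noCross => /(_ W); rewrite !inE WL c.
case/setU1P => [-> | XL]; case/setU1P => [-> | ZL].
- exact: crossxx.
- by rewrite crossC; exact: ncY.
- exact: ncY.
- exact: lamL.
Qed.

Lemma crossers_setI L X Y : laminar L -> X \in L -> cross X Y ->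
  #|crossers L (X :&: Y)| < #|crossers L Y|.
Proof.
move=> lamL XL cXY; apply: proper_card; apply/properP; split.
  apply/subsetP => Z; rewrite !inE => /andP[ZL cZ]; rewrite ZL.
  exact: cross_setI (lamL Z X ZL XL) cZ.
by exists X; rewrite !inE XL ?cXY // /cross subsetIl !andbF.
Qed.

Lemma crossers_setU L X Y : laminar L -> X \in L -> cross X Y ->
  #|crossers L (X :|: Y)| < #|crossers L Y|.
Proof.
move=> lamL XL cXY; apply: proper_card; apply/properP; split.
  apply/subsetP => Z; rewrite !inE => /andP[ZL cZ]; rewrite ZL.
  exact: cross_setU cXY (lamL Z X ZL XL) cZ.
by exists X; rewrite !inE XL ?cXY // /cross subsetUl !andbF.
Qed.

End Laminar.

Local Open Scope ring_scope.

Section Uncrossing.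
Variables (F : fieldType) (T : finType) (m : nat).
Variables (chi : {set T} -> 'rV[F]_m) (M : {set {set T}}).

Hypothesis uncross : forall X Y, X \in M -> Y \in M -> cross X Y ->
  [/\ X :&: Y \in M, X :|: Y \in M & chi X + chi Y = chi (X :&: Y) + chi (X :|: Y)].

Definition rows_of (L : {set {set T}}) : 'M[F]_(#|L|, m) :=
  \matrix_(i < #|L|) chi (enum_val i).

Lemma rows_of_mem (L : {set {set T}}) Y : Y \in L -> (chi Y <= rows_of L)%MS.
Proof.
move=> YL; rewrite -(enum_rankK_in YL YL).
by rewrite -(rowK (fun i : 'I_#|L| => chi (enum_val i))); exact: row_sub.
Qed.

Lemma maximal_laminar : exists L : {set {set T}},
  [/\ L \subset M, laminar L &
      forall Y, Y \in M -> laminar (Y |: L) -> Y \in L].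
Proof.
pose good := [set L : {set {set T}} | (L \subset M) &&
  [forall X in L, forall Y in L, ~~ cross X Y]].
have goodP (L : {set {set T}}) : reflect (L \subset M /\ laminar L) (L \in good).
  rewrite inE; apply: (iffP andP) => [[-> /forall_inP lamL] | [-> lamL]].
    by split=> // X Y XL YL; move/forall_inP: (lamL X XL) => /(_ Y YL).
  by split=> //; apply/forall_inP => X XL; apply/forall_inP => Y; exact: lamL.
have good0 : set0 \in good by apply/goodP; split=> [|X]; rewrite ?sub0set ?inE.
have [L /goodP[LM lamL] Lmax] := arg_maxnP (fun L : {set {set T}} => #|L|) good0.
exists L; split=> // Y YM lamYL; apply/negPn/negP => YL.
have /Lmax : Y |: L \in good by apply/goodP; rewrite subUset sub1set YM LM.
by rewrite /geq cardsU1 YL /= ltnn.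
Qed.

Lemma laminar_span : exists L : {set {set T}},
  [/\ L \subset M, laminar L &
      forall Y, Y \in M -> (chi Y <= rows_of L)%MS].
Proof.
have [L [LM lamL Lmax]] := maximal_laminar.
exists L; split=> // Y; move: {2}#|crossers L Y| (leqnn #|crossers L Y|) => k.
elim: k Y => [|k IH] Y ck YM.
  apply/rows_of_mem/Lmax/laminar_setU1 => //.
  by apply/eqP; rewrite -cards_eq0 -leqn0.
have [noCross | [X]] := set_0Vmem (crossers L Y).
  by apply: IH YM; rewrite noCross cards0.
rewrite inE => /andP[XL cXY].
have [IM UM modular] := uncross (subsetP LM X XL) YM cXY.
have -> : chi Y = chi (X :&: Y) + chi (X :|: Y) - chi X.
  by rewrite -modular addrC addKr.
apply: addmx_sub; first apply: addmx_sub.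
- by apply: IH IM; rewrite -ltnS (leq_trans (crossers_setI lamL XL cXY)).
- by apply: IH UM; rewrite -ltnS (leq_trans (crossers_setU lamL XL cXY)).
- by rewrite eqmx_opp rows_of_mem.
Qed.

End Uncrossing.

Section MinCuts.
Variables (R : realFieldType) (n : nat) (w : 'I_n -> 'I_n -> R).
Implicit Types (X Y Z : {set 'I_n}) (e : 'I_n * 'I_n).

Definition separates Z e := (e.1 \in Z) != (e.2 \in Z).

Lemma cut_weightE Z :
  cut_weight w Z = \sum_(e in edges w) (if separates Z e then w e.1 e.2 else 0).
Proof.
by rewrite /cut_weight big_mkcondr; apply: eq_bigr => e eE; rewrite /in_cut eE.
Qed.

Lemma edge_weight_gt0 e : e \in edges w -> 0 < w e.1 e.2.
Proof. by rewrite inE => /andP[]. Qed.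

Lemma cut_weight_setC X : cut_weight w (~: X) = cut_weight w X.
Proof.
rewrite !cut_weightE; apply: eq_bigr => e _; rewrite /separates !inE.
by case: (e.1 \in X); case: (e.2 \in X).
Qed.

Lemma mincut_setC X : is_mincut_shore w X -> is_mincut_shore w (~: X).
Proof.
case/andP => /andP[X0 XT] /forall_inP Xmin; apply/andP; split.
  rewrite /shore -[in ~: X != set0]setCT -[in ~: X != setT]setC0.
  by rewrite !(inj_eq (@setC_inj _)) X0 XT.
by apply/forall_inP => Y /Xmin; rewrite cut_weight_setC.
Qed.

Definition cut_vector X : 'rV[R]_#|edges w| :=
  \row_j (if in_cut w X (enum_val j) then 1 else 0).

Lemma cut_vector_setC X : cut_vector (~: X) = cut_vector X.
Proof.
apply/rowP => j; rewrite !mxE /in_cut !inE.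
by case: ((enum_val j).1 \in X); case: ((enum_val j).2 \in X).
Qed.

Lemma row_mincut_matrix i : row i (mincut_matrix w) =
  if is_mincut_shore w (enum_val i) then cut_vector (enum_val i) else 0.
Proof.
by apply/rowP => j; rewrite !mxE; case: is_mincut_shore; rewrite ?mxE.
Qed.

(* The edge e joins X :\: Y to Y :\: X. *)
Definition straddles X Y e :=
  [&& (e.1 \in X) != (e.1 \in Y), (e.2 \in X) != (e.2 \in Y) & separates X e].

Definition straddle_weight X Y :=
  \sum_(e in edges w) (if straddles X Y e then w e.1 e.2 else 0).

Lemma cut_weight_uncross X Y :
  cut_weight w X + cut_weight w Y =
  cut_weight w (X :&: Y) + cut_weight w (X :|: Y) + straddle_weight X Y *+ 2.
Proof.
rewrite !cut_weightE /straddle_weight -sumrMnl -!big_split /=.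
apply: eq_bigr => e _; rewrite /straddles /separates !inE.
by case: (e.1 \in X); case: (e.1 \in Y); case: (e.2 \in X); case: (e.2 \in Y);
  rewrite /= ?mul0rn ?addr0 ?add0r ?mulr2n.
Qed.

Lemma straddle_summand_ge0 X Y e : e \in edges w ->
  0 <= (if straddles X Y e then w e.1 e.2 else 0).
Proof. by move=> /edge_weight_gt0 we; case: ifP => // _; exact: ltW. Qed.

Lemma straddle_weight_ge0 X Y : 0 <= straddle_weight X Y.
Proof. exact: sumr_ge0 (@straddle_summand_ge0 X Y). Qed.

Lemma straddle_weight_eq0 X Y e :
  straddle_weight X Y = 0 -> e \in edges w -> ~~ straddles X Y e.
Proof.
move=> noStraddle eE; have := psumr_eq0P (@straddle_summand_ge0 X Y) noStraddle eE.
have := edge_weight_gt0 eE; case: (straddles X Y e) => // we0 we.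
by rewrite we ltxx in we0.
Qed.

Lemma cut_vector_modular X Y : straddle_weight X Y = 0 ->
  cut_vector X + cut_vector Y = cut_vector (X :&: Y) + cut_vector (X :|: Y).
Proof.
move=> noStraddle; apply/rowP => j; rewrite !mxE /in_cut.
have eE := enum_valP j; rewrite eE /=.
move: (straddle_weight_eq0 noStraddle eE); rewrite /straddles /separates !inE.
by case: ((enum_val j).1 \in X); case: ((enum_val j).1 \in Y);
   case: ((enum_val j).2 \in X); case: ((enum_val j).2 \in Y);
   rewrite /= ?addr0 ?add0r.
Qed.

Lemma mincut_same_weight X Y : is_mincut_shore w X -> shore Y ->
  cut_weight w Y = cut_weight w X -> is_mincut_shore w Y.
Proof.
case/andP => _ /forall_inP Xmin sY eqXY.
by rewrite /is_mincut_shore sY; apply/forall_inP => Z /Xmin; rewrite eqXY.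
Qed.

(* Uncrossing two crossing mincut shores whose union is proper: the
   intersection and union are mincut shores, and by submodularity no edge
   straddles X and Y, so the cut vectors are modular. *)
Lemma mincut_uncross X Y : is_mincut_shore w X -> is_mincut_shore w Y ->
  cross X Y -> X :|: Y != setT ->
  [/\ is_mincut_shore w (X :&: Y), is_mincut_shore w (X :|: Y) &
      cut_vector X + cut_vector Y = cut_vector (X :&: Y) + cut_vector (X :|: Y)].
Proof.
move=> mX mY /and3P[XY0 _ _] XYT.
have [sX /forall_inP Xmin] := andP mX; have [sY /forall_inP Ymin] := andP mY.
have sI : shore (X :&: Y).
  rewrite /shore XY0; apply: contraNneq XYT => XYeqT.
  by apply/eqP/setP => x; move/setP: XYeqT => /(_ x); rewrite !inE => /andP[->].
have sU : shore (X :|: Y).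
  by rewrite /shore XYT andbT setU_eq0 negb_and; case/andP: sX => ->.
have leXY := Xmin Y sY; have leYX := Ymin X sX.
have leI := Xmin _ sI; have leU := Xmin _ sU.
have D0 := straddle_weight_ge0 X Y.
have balance := cut_weight_uncross X Y; rewrite mulr2n in balance.
split.
- by apply: mincut_same_weight mX sI _; lra.
- by apply: mincut_same_weight mX sU _; lra.
- by apply: cut_vector_modular; lra.
Qed.

(* The mincut shores avoiding a root vertex r; every mincut has exactly one
   shore in this family. *)
Definition rooted_mincuts (r : 'I_n) :=
  [set X | is_mincut_shore w X & r \notin X].

(* Rooted mincuts are closed under uncrossing: a union of two of them still
   avoids r, so it is a proper shore. *)
Lemma rooted_mincuts_uncross r X Y :
  X \in rooted_mincuts r -> Y \in rooted_mincuts r -> cross X Y ->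
  [/\ X :&: Y \in rooted_mincuts r, X :|: Y \in rooted_mincuts r &
      cut_vector X + cut_vector Y = cut_vector (X :&: Y) + cut_vector (X :|: Y)].
Proof.
rewrite !inE => /andP[mX rX] /andP[mY rY] cXY.
have XYT : X :|: Y != setT.
  apply: contraNneq rX => XYeqT.
  by move/setP: XYeqT => /(_ r); rewrite !inE (negbTE rY) orbF.
have [mI mU modular] := mincut_uncross mX mY cXY XYT.
by rewrite mI mU negb_and negb_or rX rY.
Qed.

Lemma mincut_matrix_rooted r k (S : 'M[R]_(k, #|edges w|)) :
  (forall Y, Y \in rooted_mincuts r -> (cut_vector Y <= S)%MS) ->
  (mincut_matrix w <= S)%MS.
Proof.
move=> rootedS; apply/row_subP => i; rewrite row_mincut_matrix.
case: ifP => mi; last exact: sub0mx.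
have [ri | nri] := boolP (r \in enum_val i).
  by rewrite -cut_vector_setC; apply: rootedS; rewrite !inE mincut_setC ?ri.
by apply: rootedS; rewrite inE mi.
Qed.

End MinCuts.

(* Only positive-weight pairs are edges. *)
Theorem theorem1 (R : realFieldType) (n : nat) (w : 'I_n -> 'I_n -> R) :
  (2 <= n)%N ->
  (forall x y : 'I_n, w x y = w y x) ->
  (forall x y : 'I_n, x != y -> 0 <= w x y) ->
  (cdim w <= 2 * n - 3)%N.
Proof.
move=> n_ge2 _ _.
pose r : 'I_n := Ordinal (ltnW n_ge2).
have [L [Lrooted lamL Lspan]] := laminar_span (@rooted_mincuts_uncross _ _ w r).
have rank_le : (cdim w <= #|L|)%N.
  exact: leq_trans (mxrankS (mincut_matrix_rooted Lspan)) (rank_leq_row _).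
have cardU : #|[set~ r]| = n.-1 by rewrite cardsC1 card_ord.
have U0 : [set~ r] != set0 by rewrite -card_gt0 cardU; lia.
have lamLU : laminar_in [set~ r] L.
  split=> // X /(subsetP Lrooted); rewrite inE => /andP[/andP[/andP[X0 _] _] rX].
  by split=> //; apply/subsetP => x; rewrite !inE; apply: contraTneq => ->.
have L_bound := leq_trans (leq_addr _ _) (laminar_card U0 lamLU).
rewrite cardU in L_bound.
by move: rank_le L_bound; move: (cdim w) #|L| => c l; lia.
Qed.
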